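(* Every randomized dynamic posted-price (RDPP) mechanism, with any price update rule, is ex post incentive compatible for myopic bidders and dominant-strategy incentive compatible for myopic miners.
   Context: Dynamic posted-price setting: at each time step a block with $m$ slots is produced by an active miner; $n$ bidders with private values $v_i\ge 0$ submit bids $b_i$, each participating only once. Given the current posted price $q>0$, the eligible set is $M(q)=\{i:b_i\ge q\}$. A block is a set $B\subseteq M(q)$ with $|B|\le m$; each $i\in B$ receives a slot and pays $q$. The next posted price is $T(q,B)$ for a price update rule $T$. In an RDPP mechanism, the intended allocation rule is the random maximal (RM) rule: the miner selects $B$ uniformly at random among the maximal feasible sets, i.e. subsets of $M(q)$ of size $\min\{m,|M(q)|\}$. A myopic bidder's utility is $v_i-q$ if included and $0$ otherwise (in expectation over the allocation randomness); ex post IC for myopic bidders means that, when the miner follows the intended allocation rule, bidding $b_i=v_i$ weakly dominates every other bid for every bidder, for all bids of the others. A myopic miner's utility is the total payment $q|B|$ collected in the current block; DSIC for myopic miners means that following the intended allocation rule is a (weakly) dominant, utility-maximizing strategy for the miner for all bids. *)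

From mathcomp Require Import all_boot all_order all_algebra.
Set Implicit Arguments. Unset Strict Implicit. Unset Printing Implicit Defensive.
Import Order.TTheory GRing.Theory Num.Theory.
Local Open Scope ring_scope.

Section RDPP.
Variables (R : realFieldType) (n : nat).

Definition bids := 'I_n -> R.

Definition set_bid (b : bids) (i : 'I_n) (x : R) : bids :=
  fun j => if j == i then x else b j.

Definition eligible (b : bids) (q : R) : {set 'I_n} := [set i | q <= b i].

Definition feasible_block (m : nat) (b : bids) (q : R) (B : {set 'I_n}) : bool :=
  (B \subset eligible b q) && (#|B| <= m)%N.

Definition maximal_feasible (m : nat) (b : bids) (q : R) : {set {set 'I_n}} :=
  [set B : {set 'I_n} | (B \subset eligible b q) &&
                        (#|B| == minn m #|eligible b q|)].

(* A (randomized) allocation = a probability distribution over blocks. *)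
Definition alloc := {set 'I_n} -> R.

Definition is_distribution (P : alloc) : Prop :=
  (forall B, 0 <= P B) /\ \sum_(B : {set 'I_n}) P B = 1.

Definition feasible_alloc (m : nat) (b : bids) (q : R) (P : alloc) : Prop :=
  is_distribution P /\ (forall B, P B != 0 -> feasible_block m b q B).

Definition RM (m : nat) (b : bids) (q : R) : alloc :=
  fun B => if B \in maximal_feasible m b q
           then (#|maximal_feasible m b q|%:R)^-1 else 0.

(* An RDPP mechanism with update rule T: at price q the miner selects a block
   B according to RM, each included bidder pays q, and the next price is T q B. *)
Definition RDPP_outcome (T : R -> {set 'I_n} -> R) (m : nat) (b : bids) (q : R)
  : {set 'I_n} -> (R * R) :=
  fun B => (RM m b q B, T q B).

Definition bidder_utility (i : 'I_n) (v q : R) (P : alloc) : R :=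
  \sum_(B : {set 'I_n}) P B * (if i \in B then v - q else 0).

Definition miner_utility (q : R) (P : alloc) : R :=
  \sum_(B : {set 'I_n}) P B * (q * #|B|%:R).

Definition RDPP_alloc (T : R -> {set 'I_n} -> R) (m : nat) (b : bids) (q : R)
  : alloc := fun B => (RDPP_outcome T m b q B).1.

Definition expost_IC_myopic_bidders (T : R -> {set 'I_n} -> R) (m : nat) (q : R) : Prop :=
  forall (i : 'I_n) (v : R), 0 <= v ->
  forall (b : bids) (x : R),
    bidder_utility i v q (RDPP_alloc T m (set_bid b i x) q)
    <= bidder_utility i v q (RDPP_alloc T m (set_bid b i v) q).

Definition DSIC_myopic_miner (T : R -> {set 'I_n} -> R) (m : nat) (q : R) : Prop :=
  forall (b : bids) (P : alloc), feasible_alloc m b q P ->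
    miner_utility q P <= miner_utility q (RDPP_alloc T m b q).

End RDPP.

From mathcomp Require Import all_boot all_order all_algebra.
Import Order.TTheory GRing.Theory Num.Theory.
Local Open Scope ring_scope.

(* Under RM a bid only matters through whether it clears the posted price q:
   every bid above q yields the same eligible set, hence the same lottery.
   Reporting v is therefore as good as any other bid: it joins the lottery
   exactly when a slot, which costs q, is worth v >= q.  For the miner, every
   feasible block has at most min(m, |M(q)|) members, and RM always picks a
   block of exactly that size, so no lottery over feasible blocks earns more. *)

Section RandomMaximal.
Variables (R : realFieldType) (n m : nat).
Implicit Types (b : bids R n) (q v x : R) (i : 'I_n) (B : {set 'I_n}).

Lemma RDPP_allocE (T : R -> {set 'I_n} -> R) b q :
  RDPP_alloc T m b q = RM m b q.
Proof. by []. Qed.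

Lemma card_maximal_feasible_gt0 b q : (0 < #|maximal_feasible m b q|)%N.
Proof. by rewrite /maximal_feasible cards_draws bin_gt0 geq_minr. Qed.

Lemma RM_ge0 b q B : 0 <= RM m b q B.
Proof. by rewrite /RM; case: ifP => // _; rewrite invr_ge0 ler0n. Qed.

Lemma RM_eq0 b q B : B \notin maximal_feasible m b q -> RM m b q B = 0.
Proof. by rewrite /RM => /negbTE ->. Qed.

Lemma eligible_set_bid b i x y q : q <= x -> q <= y ->
  eligible (set_bid b i x) q = eligible (set_bid b i y) q.
Proof. by move=> qx qy; apply/setP => j; rewrite !inE /set_bid; case: ifP; rewrite ?qx ?qy. Qed.

Lemma RM_set_bid b i x y q : q <= x -> q <= y ->
  RM m (set_bid b i x) q = RM m (set_bid b i y) q.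
Proof. by move=> qx qy; rewrite /RM /maximal_feasible (eligible_set_bid b i x y q qx qy). Qed.

Lemma bidder_utility_RM_ineligible b i v q : b i < q ->
  bidder_utility i v q (RM m b q) = 0.
Proof.
move=> biq; apply: big1 => B _.
have [iB|] := boolP (i \in B); last by rewrite mulr0.
rewrite RM_eq0 ?mul0r // inE negb_and; apply/orP; left.
by apply/subsetPn; exists i => //; rewrite inE -ltNge.
Qed.

Lemma bidder_utility_ge0 (P : alloc R n) i v q :
  (forall B, 0 <= P B) -> q <= v -> 0 <= bidder_utility i v q P.
Proof.
move=> P0 qv; apply: sumr_ge0 => B _; apply: mulr_ge0; first exact: P0.
by case: ifP => _; rewrite ?subr_ge0.
Qed.

Lemma bidder_utility_le0 (P : alloc R n) i v q :
  (forall B, 0 <= P B) -> v < q -> bidder_utility i v q P <= 0.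
Proof.
move=> P0 vq; apply: sumr_le0 => B _; apply: mulr_ge0_le0; first exact: P0.
by case: ifP => _ //; rewrite subr_le0 ltW.
Qed.

Lemma bidder_utility_truthful_ge0 b i v q :
  0 <= bidder_utility i v q (RM m (set_bid b i v) q).
Proof.
have [qv|vq] := leP q v; first by apply: bidder_utility_ge0 => //; apply: RM_ge0.
by rewrite bidder_utility_RM_ineligible // /set_bid eqxx.
Qed.

Lemma RM_truthful b i v x q :
  bidder_utility i v q (RM m (set_bid b i x) q)
  <= bidder_utility i v q (RM m (set_bid b i v) q).
Proof.
have [qx|xq] := leP q x; last first.
  by rewrite bidder_utility_RM_ineligible ?bidder_utility_truthful_ge0 // /set_bid eqxx.
have [qv|vq] := leP q v; first by rewrite (RM_set_bid b i x v q qx qv).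
apply: le_trans (bidder_utility_truthful_ge0 b i v q).
by apply: bidder_utility_le0 => //; apply: RM_ge0.
Qed.

Lemma card_feasible_block b q B :
  feasible_block m b q B -> (#|B| <= minn m #|eligible b q|)%N.
Proof. by case/andP=> sBM cB; rewrite leq_min cB subset_leq_card. Qed.

Lemma miner_utility_RM b q :
  miner_utility q (RM m b q) = q * (minn m #|eligible b q|)%:R.
Proof.
rewrite /miner_utility (bigID (mem (maximal_feasible m b q))) /=.
rewrite [X in _ + X]big1 ?addr0 => [|B /RM_eq0 ->]; last by rewrite mul0r.
rewrite (eq_bigr (fun=> (#|maximal_feasible m b q|%:R)^-1
                        * (q * (minn m #|eligible b q|)%:R))); last first.
  by move=> B mfB; rewrite /RM mfB; move: mfB; rewrite inE => /andP[_ /eqP ->].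
rewrite sumr_const -mulrnAl -mulr_natr mulVf ?mul1r //.
by rewrite pnatr_eq0 -lt0n card_maximal_feasible_gt0.
Qed.

Lemma miner_utility_feasible_le b q (P : alloc R n) : 0 <= q ->
  feasible_alloc m b q P ->
  miner_utility q P <= q * (minn m #|eligible b q|)%:R.
Proof.
move=> q0 [[P0 P1] Pfeas].
rewrite -[leRHS]mul1r -{1}P1 mulr_suml; apply: ler_sum => B _.
have [-> | PB] := eqVneq (P B) 0; first by rewrite !mul0r.
apply/ler_wpM2l/ler_wpM2l => //.
by rewrite ler_nat card_feasible_block ?Pfeas.
Qed.

End RandomMaximal.

Theorem mainTheorem2 (R : realFieldType) (n m : nat)
  (T : R -> {set 'I_n} -> R) (q : R) (hq : 0 < q) :
  expost_IC_myopic_bidders T m q /\ DSIC_myopic_miner T m q.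
Proof.
split=> [i v _ b x | b P feasP]; rewrite !RDPP_allocE.
  exact: RM_truthful.
by rewrite miner_utility_RM miner_utility_feasible_le ?ltW.
Qed.
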